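(* Let $(\mathcal{E},\mathcal{L},\mathcal{B})$ be a weakly left resolving labelled space whose accommodating family $\mathcal{B}$ is closed under relative complements, let $S$ be its associated inverse semigroup, and let $\xi$ be a filter in $E(S)$ of finite type with word $\alpha\in\mathcal{L}^*$. Then $\xi$ is tight if and only if $\xi_{|\alpha|}$ is an ultrafilter in $\mathcal{B}_\alpha$ and at least one of the following holds: (a) there is a net $\{\mathcal{F}_\lambda\}_{\lambda\in\Lambda}\subseteq X_\alpha^{sink}$ converging to $\xi_{|\alpha|}$; (b) there is a net $\{(t_\lambda,\mathcal{F}_\lambda)\}_{\lambda\in\Lambda}$ with $t_\lambda\in\mathcal{A}$ and $\mathcal{F}_\lambda\in X_{\alpha t_\lambda}$ for each $\lambda$, such that $\{f_{\alpha[t_\lambda]}(\mathcal{F}_\lambda)\}_{\lambda\in\Lambda}$ converges to $\xi_{|\alpha|}$ and for every $b\in\mathcal{A}$ there is $\lambda_b\in\Lambda$ with $t_\lambda\neq b$ for all $\lambda\ge\lambda_b$.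
   Context: A directed graph $\mathcal{E}=(\mathcal{E}^0,\mathcal{E}^1,r,s)$ has countable nonempty vertex set, edge set, range/source maps; paths satisfy $r(\lambda_i)=s(\lambda_{i+1})$. A labelled graph over the alphabet $\mathcal{A}$ has a surjective labelling $\mathcal{L}:\mathcal{E}^1\to\mathcal{A}$ extended letterwise to paths. $\omega$ is the empty word, $\mathcal{L}^+=\bigcup_{n\ge1}\mathcal{L}(\mathcal{E}^n)$, $\mathcal{L}^*=\{\omega\}\cup\mathcal{L}^+$; $\alpha_{i,j}=\alpha_i\cdots\alpha_j$, $\alpha_{1,0}=\omega$. For $A\subseteq\mathcal{E}^0$ and a word $\beta$ (in particular a letter $b$): $r(A,\beta)=\{r(\lambda):\mathcal{L}(\lambda)=\beta,\ s(\lambda)\in A\}$, $r(A,\omega)=A$, $r(\beta)=r(\mathcal{E}^0,\beta)$. $\mathcal{B}$ accommodating: closed under $r(\cdot,\alpha)$, finite intersections and unions, contains $r(\alpha)$ for $\alpha\in\mathcal{L}^+$; labelled space weakly left resolving if $r(A\cap B,\alpha)=r(A,\alpha)\cap r(B,\alpha)$ for $A,B\in\mathcal{B}$, $\alpha\in\mathcal{L}^+$. $\mathcal{B}_\alpha=\mathcal{B}\cap\mathcal{P}(r(\alpha))$, $\mathcal{B}_\omega=\mathcal{B}$. $S$ = triples $(\alpha,A,\beta)$, $\alpha,\beta\in\mathcal{L}^*$, $\emptyset\ne A\in\mathcal{B}_\alpha\cap\mathcal{B}_\beta$, plus $0$; product $(\alpha,A,\beta)(\gamma,B,\delta)=(\alpha\gamma',r(A,\gamma')\cap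 B,\delta)$ if $\gamma=\beta\gamma'$, $=(\alpha,A\cap r(B,\beta'),\delta\beta')$ if $\beta=\gamma\beta'$, $=0$ otherwise (empty middle entry identified with $0$). $E(S)=\{(\alpha,A,\alpha)\}\cup\{0\}$, $p\le q$ iff $pq=p$. A filter in a poset with least element $0$ is a nonempty upward-closed subset not containing $0$ in which any two elements have a common lower bound in it; an ultrafilter is a maximal filter. A filter $\xi$ in $E(S)$ is of finite type with word $\alpha$ if $\alpha$ is the longest word among the words $\beta$ with $(\beta,B,\beta)\in\xi$; $\xi_n=\{A\in\mathcal{B}:(\alpha_{1,n},A,\alpha_{1,n})\in\xi\}$. For $x\in E(S)$, $Z\subseteq\{y:y\le x\}$ is a cover of $x$ if every nonzero $y\le x$ has $zy\neq0$ for some $z\in Z$; $\xi$ is tight if $Z\cap\xi\neq\emptyset$ for every $x\in\xi$ and every finite cover $Z$ of $x$. For $\alpha\in\mathcal{L}^*$, $X_\alpha$ is the set of ultrafilters in $\mathcal{B}_\alpha$ (under inclusion) and $X_\alpha^{sink}=\{\mathcal{F}\in X_\alpha:\ \forall b\in\mathcal{A}\ \exists A\in\mathcal{F}\text{ with } r(A,b)=\emptyset\}$. For a letter $t$ with $\alpha t\in\mathcal{L}^*$ and $\mathcal{F}\in X_{\alpha t}$, $f_{\alpha[t]}(\mathcal{F})=\{A\in\mathcal{B}_\alpha: r(A,t)\in\mathcal{F}\}$ (an element of $X_\alpha$, or possibly $\emptyset$ when $\alpha=\omega$). Convergence of a net of subsets $\mathcal{F}_\lambda$ of $\mathcal{B}_\alpha$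 to $\mathcal{F}$ means: for each $A\in\mathcal{B}_\alpha$ there is $\lambda_0$ with $A\in\mathcal{F}_\lambda\Leftrightarrow A\in\mathcal{F}$ for all $\lambda\ge\lambda_0$. *)

From mathcomp Require Import ssreflect ssrfun ssrbool eqtype ssrnat seq choice path.
From Stdlib Require Import ClassicalEpsilon.

(* A directed graph with countable vertex and edge sets, labelled over a
   (countable) alphabet. Nonemptiness of the vertex set and surjectivity of
   the labelling are hypotheses of the main theorem. *)
Record lgraph := LGraph {
  vtx : countType;
  edg : countType;
  alph : countType;
  rng : edg -> vtx;
  src : edg -> vtx;
  lab : edg -> alph
}.
Arguments rng {l}.
Arguments src {l}.
Arguments lab {l}.

Section LS.
Variable G : lgraph.
Local Notation V := (vtx G).
Local Notation E := (edg G).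
Local Notation A := (alph G).

Definition vset := V -> Prop.
Definition word := seq A.

Definition is_path (e : E) (p : seq E) : Prop :=
  path (fun e1 e2 : E => @rng G e1 == @src G e2) e p.

Definition Lplus (w : word) : Prop :=
  exists e p, is_path e p /\ map lab (e :: p) = w.
Definition Lstar (w : word) : Prop := w = [::] \/ Lplus w.

Definition rr (X : vset) (beta : word) : vset :=
  match beta with
  | [::] => X
  | _ :: _ => fun v => exists e p, is_path e p /\ map lab (e :: p) = beta
                        /\ X (src e) /\ rng (last e p) = v
  end.

Definition rw (beta : word) : vset := rr (fun _ => True) beta.

Definition setI (X Y : vset) : vset := fun v => X v /\ Y v.
Definition setU (X Y : vset) : vset := fun v => X v \/ Y v.
Definition setD (X Y : vset) : vset := fun v => X v /\ ~ Y v.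
Definition subs (X Y : vset) : Prop := forall v, X v -> Y v.
Definition nonempty (X : vset) : Prop := exists v, X v.

Variable B : vset -> Prop.

Definition accommodating : Prop :=
  (forall X alpha, B X -> Lstar alpha -> B (rr X alpha)) /\
  (forall X Y, B X -> B Y -> B (setI X Y)) /\
  (forall X Y, B X -> B Y -> B (setU X Y)) /\
  (forall alpha, Lplus alpha -> B (rw alpha)).

Definition weakly_left_resolving : Prop :=
  forall X Y alpha, B X -> B Y -> Lplus alpha ->
    rr (setI X Y) alpha = setI (rr X alpha) (rr Y alpha).

Definition relcomp_closed : Prop :=
  forall X Y, B X -> B Y -> B (setD X Y).

Definition Bsub (alpha : word) (X : vset) : Prop := B X /\ subs X (rw alpha).

(* None is 0; Some (alpha, X, beta) is the triple (alpha, X, beta). *)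
Definition Selt := option (word * vset * word).

Definition Svalid (x : Selt) : Prop :=
  match x with
  | None => True
  | Some (alpha, X, beta) =>
      Lstar alpha /\ Lstar beta /\ Bsub alpha X /\ Bsub beta X /\ nonempty X
  end.

Fixpoint strip (beta gamma : word) : option word :=
  match beta, gamma with
  | [::], _ => Some gamma
  | b :: beta', c :: gamma' => if b == c then strip beta' gamma' else None
  | _ :: _, [::] => None
  end.

(* triples with empty middle entry are identified with 0 *)
Definition mkS (alpha : word) (X : vset) (beta : word) : Selt :=
  if excluded_middle_informative (nonempty X) then Some (alpha, X, beta) else None.

Definition Smul (x y : Selt) : Selt :=
  match x, y with
  | Some (alpha, X, beta), Some (gamma, Y, delta) =>
      match strip beta gamma with
      | Some g' => mkS (alpha ++ g') (setI (rr X g') Y) delta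
      | None =>
          match strip gamma beta with
          | Some b' => mkS alpha (setI X (rr Y b')) (delta ++ b')
          | None => None
          end
      end
  | _, _ => None
  end.

Definition isE (x : Selt) : Prop :=
  x = None \/ (exists alpha X, x = Some (alpha, X, alpha) /\ Svalid x).

Definition Sle (p q : Selt) : Prop := Smul p q = p.

End LS.
Arguments is_path {G}.
Arguments Lplus {G}.
Arguments Lstar {G}.
Arguments rr {G}.
Arguments rw {G}.
Arguments setI {G}.
Arguments setU {G}.
Arguments setD {G}.
Arguments subs {G}.
Arguments nonempty {G}.
Arguments accommodating {G}.
Arguments weakly_left_resolving {G}.
Arguments relcomp_closed {G}.
Arguments Bsub {G}.
Arguments Svalid {G}.
Arguments strip {G}.
Arguments mkS {G}.
Arguments Smul {G}.
Arguments isE {G}.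
Arguments Sle {G}.

Section Filters.
Variable T : Type.
Variable P : T -> Prop.
Variable le : T -> T -> Prop.
Variable isbot : T -> Prop.

Definition is_filter (F : T -> Prop) : Prop :=
  (forall x, F x -> P x) /\
  (exists x, F x) /\
  (forall x y, F x -> P y -> le x y -> F y) /\
  (forall x, F x -> ~ isbot x) /\
  (forall x y, F x -> F y -> exists z, F z /\ le z x /\ le z y).

Definition is_ultrafilter (F : T -> Prop) : Prop :=
  is_filter F /\
  (forall F', is_filter F' -> (forall x, F x -> F' x) -> forall x, F' x -> F x).
End Filters.
Arguments is_filter {T}.
Arguments is_ultrafilter {T}.

Definition directed (L : Type) (le : L -> L -> Prop) : Prop :=
  (exists l : L, True) /\
  (forall l, le l l) /\
  (forall l1 l2 l3, le l1 l2 -> le l2 l3 -> le l1 l3) /\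
  (forall l1 l2, exists l3, le l1 l3 /\ le l2 l3).
Arguments directed {L}.

Section Main.
Variable G : lgraph.
Local Notation V := (vtx G).
Local Notation A := (alph G).
Variable B : vset G -> Prop.

Definition ES_filter (xi : Selt G -> Prop) : Prop :=
  is_filter (isE B) (@Sle G) (fun x => x = None) xi.

Definition finite_type (xi : Selt G -> Prop) (alpha : word G) : Prop :=
  (exists X, xi (Some (alpha, X, alpha))) /\
  (forall beta X, xi (Some (beta, X, beta)) -> size beta <= size alpha).

Definition xi_n (xi : Selt G -> Prop) (alpha : word G) (n : nat) : vset G -> Prop :=
  fun X => B X /\ xi (Some (take n alpha, X, take n alpha)).

Definition is_cover (x : Selt G) (Z : seq (Selt G)) : Prop :=
  (forall z, List.In z Z -> isE B z /\ Sle z x) /\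
  (forall y, isE B y -> y <> None -> Sle y x ->
     exists z, List.In z Z /\ Smul z y <> None).

Definition tight (xi : Selt G -> Prop) : Prop :=
  forall x (Z : seq (Selt G)), xi x -> is_cover x Z ->
    exists z, List.In z Z /\ xi z.

Definition X_ (alpha : word G) (F : vset G -> Prop) : Prop :=
  is_ultrafilter (Bsub B alpha) (@subs G) (fun X => ~ nonempty X) F.

Definition X_sink (alpha : word G) (F : vset G -> Prop) : Prop :=
  X_ alpha F /\
  forall b : A, exists X, F X /\ forall v, ~ rr X [:: b] v.

Definition f_at (alpha : word G) (t : A) (F : vset G -> Prop) : vset G -> Prop :=
  fun X => Bsub B alpha X /\ F (rr X [:: t]).

Definition converges (alpha : word G) (L : Type) (le : L -> L -> Prop)
    (Fn : L -> vset G -> Prop) (F : vset G -> Prop) : Prop :=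
  forall X, Bsub B alpha X ->
    exists l0, forall l, le l0 l -> (Fn l X <-> F X).

End Main.
Arguments ES_filter {G}.
Arguments finite_type {G}.
Arguments xi_n {G}.
Arguments is_cover {G}.
Arguments tight {G}.
Arguments X_ {G}.
Arguments X_sink {G}.
Arguments f_at {G}.
Arguments converges {G} B alpha {L}.
Arguments finite_type {G} xi alpha.

From mathcomp Require Import ssreflect ssrfun ssrbool eqtype ssrnat seq choice path.
From Stdlib Require Import Classical FunctionalExtensionality PropExtensionality ClassicalEpsilon.
From mathcomp Require boolp classical_sets.

(* A filter of finite type is tested for tightness on finite covers of its members
   [(beta, X, beta)]; each of these dominates some [(alpha, A, alpha)] with [A] in
   [xi_|alpha|], so only covers of the latter matter.  The cover
   [{(alpha, X ∩ Y, alpha), (alpha, X \ Y, alpha)}] forces [xi_|alpha|] to be an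
   ultrafilter.  If some member [A0] of [xi_|alpha|] lies in no sink ultrafilter, the
   covers [{(alpha t, r(W, t), alpha t) | t in s}] show that every [W ⊆ A0] in
   [xi_|alpha|] can be continued by a letter outside any finite set [s]; indexing by
   such pairs [(W, s)] gives the net of (b), and otherwise the sink ultrafilters
   through the members of [xi_|alpha|] give the net of (a).  Conversely, if a cover [Z]
   of a member of [xi] avoided [xi], a far enough element of the net yields a nonzero
   idempotent below that member orthogonal to all of [Z]: members whose word is a
   prefix of [alpha] are excluded by the ultrafilter, longer ones by the sink
   condition in (a) and by the letters [t_lambda] eventually avoiding each letter in
   (b). *)

Set Implicit Arguments.
Unset Strict Implicit.

Lemma catI (T : Type) (s : seq T) : injective (cat s).
Proof. by elim: s => //= x s IH a b [] /IH. Qed.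

Lemma In_map_mem (T : eqType) (U : Type) (f : T -> U) (s : seq T) x :
  x \in s -> List.In (f x) (map f s).
Proof. by elim: s => //= y s IH; rewrite inE => /orP [/eqP ->|/IH]; [left|right]. Qed.

Section Words.
Variable G : lgraph.

Lemma vset_ext (X Y : vset G) : (forall v, X v <-> Y v) -> X = Y.
Proof.
move=> XY; apply: functional_extensionality => v.
exact: propositional_extensionality.
Qed.

Lemma strip_cat (b d : word G) : strip b (b ++ d) = Some d.
Proof. by elim: b => //= x b IH; rewrite eqxx. Qed.

Lemma strip_Some (b g d : word G) : strip b g = Some d -> g = b ++ d.
Proof.
elim: b g => [|x b IH] [|y g] //= => [[->]|[->]|] //.
by case: eqP => // -> /IH ->.
Qed.

Lemma word_cases (g a : word G) :
  [\/ exists d, a = g ++ d, exists b e, g = a ++ b :: e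
    | (forall d, a <> g ++ d) /\ (forall d, g <> a ++ d)].
Proof.
case Ega: (strip g a) => [d|]; first by apply: Or31; exists d; exact: strip_Some.
case Eag: (strip a g) => [[|b e]|].
- by move: Ega; rewrite (strip_Some Eag) cats0 -{2}[a]cats0 strip_cat.
- by apply: Or32; exists b, e; exact: strip_Some.
by apply: Or33; split=> d Ed; [move: Ega | move: Eag]; rewrite Ed strip_cat.
Qed.

Lemma mkS_ne (a b : word G) X : nonempty X -> mkS a X b = Some (a, X, b).
Proof. by rewrite /mkS; case: excluded_middle_informative. Qed.

Lemma mkS_empty (a b : word G) X : ~ nonempty X -> mkS a X b = None.
Proof. by rewrite /mkS; case: excluded_middle_informative. Qed.

Lemma rr_mono (X Y : vset G) w : subs X Y -> subs (rr X w) (rr Y w).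
Proof.
case: w => [|a w] XY v /=; first exact: XY.
by move=> [e [p [? [? [/XY ? ?]]]]]; exists e, p.
Qed.

Lemma rr_nonempty_src (X : vset G) w : nonempty (rr X w) -> nonempty X.
Proof. by case: w => [|a w] //= [v [e [p [_ [_ [Xe _]]]]]]; exists (src e). Qed.

Lemma rr_nonempty_Lplus (X : vset G) w :
  w <> [::] -> nonempty (rr X w) -> Lplus w.
Proof. by case: w => [|a w] // _ [v [e [p [pe [le _]]]]]; exists e, p. Qed.

Lemma rr_cat (X : vset G) u w : rr (rr X u) w = rr X (u ++ w).
Proof.
case: u => [|a u] //; case: w => [|b w]; first by rewrite cats0.
apply: vset_ext => v; split.
- move=> [e' [p' [pe' [le' [[e [p [pe [le [Xe je]]]]] <-]]]]].
  exists e, (p ++ e' :: p'); split; first by rewrite /is_path cat_path pe /= je eqxx.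
  by rewrite /= map_cat; move: le le' => /= [-> ->] ->; rewrite last_cat.
move=> [e [q [pq [/= [la lq] [Xe <-]]]]].
have sq : size q = size u + size (b :: w) by rewrite -(size_map lab) lq size_cat.
case Ed: (drop (size u) q) => [|e' p'].
  by move: (size_drop (size u) q); rewrite Ed sq addKn.
have Eq : q = take (size u) q ++ e' :: p' by rewrite -Ed cat_take_drop.
have lp : map lab (e' :: p') = b :: w by rewrite -Ed map_drop lq drop_size_cat.
move: pq; rewrite /is_path Eq cat_path => /andP [pu /= /andP [/eqP je pt]].
exists e', p'; do 2 (split=> //).
split; last by rewrite Eq last_cat.
exists e, (take (size u) q); split; first exact: pu.
by rewrite /= la map_take lq take_size_cat.
Qed.

Lemma rr_nonempty_first (X : vset G) b w :
  nonempty (rr X (b :: w)) -> nonempty (rr X [:: b]).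
Proof. by rewrite -[b :: w]/([:: b] ++ w) -rr_cat => /rr_nonempty_src. Qed.

Lemma rr_setI_or_setD (X Y : vset G) d v :
  rr X d v -> rr (setI X Y) d v \/ rr (setD X Y) d v.
Proof.
case: d => [|a d] /=; first by case: (classic (Y v)) => ? ?; [left|right].
move=> [e [p [? [? [? ?]]]]].
by case: (classic (Y (src e))) => ?; [left|right]; exists e, p.
Qed.

End Words.

Section Filters.
Variables (T : Type) (P : T -> Prop) (le : T -> T -> Prop) (isbot : T -> Prop).
Local Notation filter := (is_filter P le isbot).

Lemma filter_finite_meet (F : T -> Prop) (I : Type) (s : seq I) (Q : I -> T -> Prop)
    x0 :
  filter F -> (forall x y z, le x y -> le y z -> le x z) ->
  (forall i x y, Q i y -> le x y -> Q i x) -> F x0 ->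
  (forall i, List.In i s -> exists x, F x /\ Q i x) ->
  exists x, [/\ F x, le x x0 & forall i, List.In i s -> Q i x].
Proof.
move=> [_ [_ [_ [_ meetF]]]] le_trans Qdown Fx0; elim: s => [|i s IH] Qs.
  by case: (meetF x0 x0 Fx0 Fx0) => z [Fz [zx0 _]]; exists z.
have [x [Fx xx0 Qx]] := IH (fun j sj => Qs j (or_intror sj)).
have [y [Fy Qy]] := Qs i (or_introl erefl).
have [z [Fz [zx zy]]] := meetF x y Fx Fy.
exists z; split=> //; first exact: le_trans xx0.
by move=> j [<-|sj]; [exact: Qdown zy | exact: Qdown (Qx j sj) zx].
Qed.

Lemma principal_filter w :
  (forall x, le x x) -> (forall x y z, le x y -> le y z -> le x z) ->
  (forall x y, le x y -> isbot y -> isbot x) ->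
  P w -> ~ isbot w -> filter (fun x => P x /\ le w x).
Proof.
move=> le_refl le_trans botW Pw nbw.
split; first by move=> x [].
split; first by exists w.
split; first by move=> x y [_ wx] Py xy; split=> //; exact: le_trans xy.
split; first by move=> x [_ wx] /(botW _ _ wx).
by move=> x y [_ wx] [_ wy]; exists w.
Qed.

Lemma filter_chain_union (C : (T -> Prop) -> Prop) :
  (exists F, C F) -> (forall F, C F -> filter F) ->
  (forall F F', C F -> C F' -> (forall x, F x -> F' x) \/ (forall x, F' x -> F x)) ->
  filter (fun x => exists F, C F /\ F x).
Proof.
move=> [F0 CF0] Cfil Ctot; split.
  by move=> x [F [/Cfil [PF _] Fx]]; exact: PF.
split; first by case: (Cfil _ CF0) => _ [[x F0x] _]; exists x, F0.
split.
  move=> x y [F [CF Fx]] Py xy; exists F; split=> //.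
  by case: (Cfil _ CF) => _ [_ [upF _]]; exact: (upF _ _ Fx Py xy).
split.
  by move=> x [F [CF Fx]]; case: (Cfil _ CF) => _ [_ [_ [botF _]]]; exact: botF.
move=> x y [F [CF Fx]] [F' [CF' F'y]].
have [H [CH [Hx Hy]]] : exists H, C H /\ H x /\ H y.
  by case: (Ctot _ _ CF CF') => FF'; [exists F' | exists F]; split=> //; split; auto.
case: (Cfil _ CH) => _ [_ [_ [_ meetH]]].
by case: (meetH x y Hx Hy) => z [Hz zxy]; exists z; split=> //; exists H.
Qed.

Lemma ultrafilter_extension F0 : filter F0 ->
  exists F, is_ultrafilter P le isbot F /\ forall x, F0 x -> F x.
Proof.
move=> fil0.
pose U := {F : T -> Prop | filter F /\ forall x, F0 x -> F x}.
pose R (F F' : U) := boolp.asbool (forall x, sval F x -> sval F' x).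
have [Fm Fmax] : exists Fm : U, classical_sets.premaximal R Fm.
  apply: (@classical_sets.ZL_preorder _ (exist _ F0 (conj fil0 (fun _ h => h))) R).
  - by move=> F; apply/boolp.asboolP.
  - move=> F1 F2 F3 /boolp.asboolP F12 /boolp.asboolP F23.
    by apply/boolp.asboolP => x /F12 /F23.
  move=> Ch Chtot; case: (classic (exists F, Ch F)) => [[F1 ChF1]|Ch0]; last first.
    by exists (exist _ F0 (conj fil0 (fun _ h => h))) => F ChF; case: Ch0; exists F.
  pose C G := exists F, Ch F /\ sval F = G.
  have filC : filter (fun x => exists G, C G /\ G x).
    apply: filter_chain_union; first by exists (sval F1), F1.
      by move=> _ [F [_ <-]]; case: (svalP F).
    move=> _ _ [F [ChF <-]] [F' [ChF' <-]].
    by case: (Chtot F F' ChF ChF') => /boolp.asboolP; auto.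
  have F0C : forall x, F0 x -> exists G, C G /\ G x.
    by move=> x F0x; exists (sval F1); split; [exists F1 | case: (svalP F1) => _; apply].
  exists (exist (fun F => filter F /\ forall x, F0 x -> F x) _ (conj filC F0C)).
  move=> F ChF; apply/boolp.asboolP => x Fx.
  by exists (sval F); split=> //; exists F.
exists (sval Fm); case: (svalP Fm) => filFm F0Fm; split=> //; split=> // F' filF' FmF'.
have FmF'R : R Fm (exist _ F' (conj filF' (fun x h => FmF' x (F0Fm x h)))).
  exact/boolp.asboolP.
by move/Fmax/boolp.asboolP: FmF'R.
Qed.

End Filters.

Lemma directed_eventually_all (L : Type) (le : L -> L -> Prop) (I : Type) (s : seq I)
    (Q : I -> L -> Prop) :
  directed le -> (forall i, List.In i s -> exists l0, forall l, le l0 l -> Q i l) ->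
  exists l0, forall l, le l0 l -> forall i, List.In i s -> Q i l.
Proof.
move=> [[l0 _] [_ [le_trans ub]]]; elim: s => [|i s IH] Qs; first by exists l0.
have [l1 Ql1] := IH (fun j sj => Qs j (or_intror sj)).
have [l2 Ql2] := Qs i (or_introl erefl).
have [l3 [l13 l23]] := ub l1 l2.
exists l3 => l l3l j [<-|sj]; first exact: Ql2 (le_trans _ _ _ l23 l3l).
exact: Ql1 (le_trans _ _ _ l13 l3l) _ sj.
Qed.

Definition sink_set (G : lgraph) (W : vset G) := forall b, ~ nonempty (rr W [:: b]).

Section LabelledSpace.
Variable G : lgraph.
Variable B : vset G -> Prop.
Hypothesis Hacc : accommodating B.
Hypothesis Hwlr : weakly_left_resolving B.
Hypothesis Hrc : relcomp_closed B.

Definition idem (g : word G) (W : vset G) : Selt G := Some (g, W, g).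

Lemma B_setI X Y : B X -> B Y -> B (setI X Y).
Proof. by case: Hacc => _ [BI _]; apply: BI. Qed.

(* For a word outside [L^+] the relative range is empty, i.e. [X \ X]. *)
Lemma B_rr X w : B X -> B (rr X w).
Proof.
case: w => [|a w] // BX; case: (classic (Lplus (a :: w))) => Lw.
  by case: Hacc => Brr _; apply: Brr => //; right.
have -> : rr X (a :: w) = setD X X.
  apply: vset_ext => v; split=> [Xv|[]//].
  by case: Lw; apply: (@rr_nonempty_Lplus _ X) => //; exists v.
exact: Hrc.
Qed.

Lemma rr_setI_empty X Y w : B X -> B Y -> ~ nonempty (setI X Y) ->
  ~ nonempty (setI (rr X w) (rr Y w)).
Proof.
case: w => [|a w] // BX BY XY; case: (classic (Lplus (a :: w))) => Lw.
  by rewrite -Hwlr // => /rr_nonempty_src.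
by move=> [v [Xv _]]; apply: Lw; apply: (@rr_nonempty_Lplus _ X) => //; exists v.
Qed.

Lemma Bsub_rr g X w : Bsub B g X -> Bsub B (g ++ w) (rr X w).
Proof. by move=> [BX gX]; split; [exact: B_rr | rewrite /rw -rr_cat; exact: rr_mono]. Qed.

Lemma Lstar_of_Bsub g W : Bsub B g W -> nonempty W -> Lstar g.
Proof.
case: g => [|a g]; first by left.
move=> [_ gW] [v /gW Wv]; right.
by apply: (@rr_nonempty_Lplus _ (fun _ => True)) => //; exists v.
Qed.

Lemma isE_idem g W : Bsub B g W -> nonempty W -> isE B (idem g W).
Proof.
move=> gW Wn; right; exists g, W; split=> //.
by have := Lstar_of_Bsub gW Wn; do 4 (split=> //).
Qed.

Lemma isE_mkS g W : Bsub B g W -> isE B (mkS g W g).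
Proof.
case: (classic (nonempty W)) => Wn gW; last by rewrite mkS_empty //; left.
by rewrite mkS_ne //; exact: isE_idem.
Qed.

Lemma isE_Some y : isE B y -> y <> None ->
  exists g W, y = idem g W /\ Bsub B g W /\ nonempty W.
Proof. by case=> [->|[g [W [-> [_ [_ [gW [_ Wn]]]]]]]] //; exists g, W. Qed.

Lemma Smul_idem_catl a d W X :
  Smul (idem (a ++ d) W) (idem a X) = mkS (a ++ d) (setI W (rr X d)) (a ++ d).
Proof.
rewrite /Smul /idem; case: d => [|c d].
  by rewrite cats0 -{2}[a]cats0 strip_cat cats0.
case E: (strip (a ++ c :: d) a) => [d'|]; last by rewrite strip_cat.
move: (f_equal size (strip_Some E)) => /eqP.
by rewrite !size_cat /= -addnA -{1}(addn0 (size a)) eqn_add2l.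
Qed.

Lemma Smul_idem_catr a d W X :
  Smul (idem a X) (idem (a ++ d) W) = mkS (a ++ d) (setI (rr X d) W) (a ++ d).
Proof. by rewrite /Smul /idem strip_cat. Qed.

Lemma Smul_idem_incomparable g a W X :
  (forall d, a <> g ++ d) -> (forall d, g <> a ++ d) ->
  Smul (idem g W) (idem a X) = None.
Proof.
move=> ga ag; rewrite /Smul /idem.
case E: (strip g a) => [d|]; first by case: (ga d); exact: strip_Some.
by case E': (strip a g) => [d|] //; case: (ag d); exact: strip_Some.
Qed.

Lemma Sle_mkS g a d W X : g = a ++ d -> subs W (rr X d) ->
  Sle (mkS g W g) (idem a X).
Proof.
move=> -> WX; case: (classic (nonempty W)) => Wn; last by rewrite mkS_empty.
rewrite /Sle mkS_ne // Smul_idem_catl.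
suff -> : setI W (rr X d) = W by rewrite mkS_ne.
by apply: vset_ext => v; split=> [[]|Wv] //; split=> //; exact: WX.
Qed.

Lemma Sle_idem g a W X : nonempty W ->
  Sle (idem g W) (idem a X) <-> exists d, g = a ++ d /\ subs W (rr X d).
Proof.
move=> Wn; split; last by move=> [d [-> WX]]; rewrite /idem -(mkS_ne _ _ Wn); exact: Sle_mkS.
rewrite /Sle; case: (word_cases g a) => [[d ->]|[b [e ->]]|[ga ag]].
- rewrite Smul_idem_catr /mkS; case: excluded_middle_informative => // _ [].
  move=> /(f_equal size) /eqP; rewrite size_cat -{2}(addn0 (size g)) eqn_add2l.
  move=> /eqP /size0nil -> WXW; exists [::]; split; first by rewrite cats0.
  by move=> v; rewrite -WXW => -[].
- rewrite Smul_idem_catl /mkS; case: excluded_middle_informative => // _ [WXW].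
  by exists (b :: e); split=> // v; rewrite -WXW => -[].
by rewrite Smul_idem_incomparable.
Qed.

Section Ultrafilters.
Variable b : word G.
Variable Gf : vset G -> Prop.
Hypothesis ufG : X_ B b Gf.

Lemma uf_Bsub X : Gf X -> Bsub B b X.
Proof. by case: ufG => [[carG _] _]; exact: carG. Qed.

Lemma uf_up X Y : Gf X -> Bsub B b Y -> subs X Y -> Gf Y.
Proof. by case: ufG => [[_ [_ [upG _]]] _]; exact: upG. Qed.

Lemma uf_nonempty X : Gf X -> nonempty X.
Proof. by case: ufG => [[_ [_ [_ [botG _]]]] _] /botG /NNPP. Qed.

Lemma uf_meet X Y : Gf X -> Gf Y -> exists Z, Gf Z /\ subs Z X /\ subs Z Y.
Proof. by case: ufG => [[_ [_ [_ [_ meetG]]]] _]; exact: meetG. Qed.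

Lemma uf_setI_nonempty X Y : Gf X -> Gf Y -> nonempty (setI X Y).
Proof.
move=> GX GY; have [Z [/uf_nonempty [v Zv] [ZX ZY]]] := uf_meet GX GY.
by exists v; split; [exact: ZX | exact: ZY].
Qed.

Lemma uf_finite_meet (I : Type) (s : seq I) (Q : I -> vset G -> Prop) X0 :
  (forall i X Y, Q i X -> subs Y X -> Q i Y) -> Gf X0 ->
  (forall i, List.In i s -> exists X, Gf X /\ Q i X) ->
  exists X, [/\ Gf X, subs X X0 & forall i, List.In i s -> Q i X].
Proof.
move=> Qdown; apply: (filter_finite_meet (proj1 ufG)) => [X Y Z XY YZ v /XY /YZ //|].
by move=> i X Y QY XY; exact: (Qdown _ _ _ QY XY).
Qed.

(* Maximality: a member of [B_b] outside [Gf] is disjoint from some member of [Gf],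
   for otherwise its traces on [Gf] would generate a larger filter. *)
Lemma uf_disjoint_of_notin Y : Bsub B b Y -> ~ Gf Y ->
  exists D, Gf D /\ ~ nonempty (setI D Y).
Proof.
move=> [BY bY] GY; apply: NNPP => noD.
have meetY D : Gf D -> nonempty (setI D Y).
  by move=> GD; apply: NNPP => DY; apply: noD; exists D.
pose F' Z := Bsub B b Z /\ exists D, Gf D /\ subs (setI D Y) Z.
have filF' : is_filter (Bsub B b) (@subs G) (fun X => ~ nonempty X) F'.
  split; first by move=> X [].
  split.
    by case: (proj1 ufG) => _ [[D GD] _]; exists Y; split=> //; exists D; split=> // v [].
  split.
    by move=> X Z [_ [D [GD DX]]] bZ XZ; split=> //; exists D; split=> // v /DX /XZ.
  split; first by move=> X [_ [D [GD DX]]]; case: (meetY D GD) => v /DX Xv; apply; exists v.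
  move=> X Z [_ [D1 [GD1 DX]]] [_ [D2 [GD2 DZ]]].
  have [D [GD [D1D D2D]]] := uf_meet GD1 GD2.
  have [BD bD] := uf_Bsub GD.
  exists (setI D Y); split.
    by split; [split; [exact: B_setI | move=> v [/bD]] | exists D; split].
  by split=> v [Dv Yv]; [apply: DX | apply: DZ]; split=> //; [exact: D1D | exact: D2D].
apply: GY; apply: (proj2 ufG F' filF').
  by move=> X GX; split; [exact: uf_Bsub | exists X; split=> // v []].
by case: (proj1 ufG) => _ [[D GD] _]; split=> //; exists D; split=> // v [].
Qed.

End Ultrafilters.

Lemma uf_of_nonempty b W : Bsub B b W -> nonempty W -> exists Gf, X_ B b Gf /\ Gf W.
Proof.
move=> bW Wn.
have filW : is_filter (Bsub B b) (@subs G) (fun X => ~ nonempty X)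
                      (fun X => Bsub B b X /\ subs W X).
  apply: principal_filter => //.
  - by move=> X v.
  - by move=> X Y Z XY YZ v /XY /YZ.
  - by move=> X Y XY Yn [v /XY Yv]; apply: Yn; exists v.
have [Gf [ufG sub]] := ultrafilter_extension filW.
by exists Gf; split=> //; apply: sub; split.
Qed.

Lemma sink_uf_of_sink_set b W : Bsub B b W -> nonempty W -> sink_set W ->
  exists Gf, X_sink B b Gf /\ Gf W.
Proof.
move=> bW Wn sinkW; have [Gf [ufG GW]] := uf_of_nonempty bW Wn.
by exists Gf; split=> //; split=> // c; exists W; split=> // v Wv; apply: (sinkW c); exists v.
Qed.

(* A net of filters converges to an ultrafilter [F] as soon as each member of [F]
   eventually belongs to the net: members outside [F] are then eventually excluded
   by disjointness. *)
Lemma converges_to_uf b F (L : Type) (le : L -> L -> Prop) (Phi : L -> vset G -> Prop) :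
  X_ B b F ->
  (forall l X Y, Phi l X -> Bsub B b Y -> subs X Y -> Phi l Y) ->
  (forall l X Y, Phi l X -> Phi l Y -> nonempty (setI X Y)) ->
  (forall X, F X -> exists l0, forall l, le l0 l -> Phi l X) ->
  converges B b le Phi F.
Proof.
move=> ufF upPhi meetPhi evF X bX; case: (classic (F X)) => FX.
  by case: (evF X FX) => l0 Hl0; exists l0 => l l0l; split=> // _; exact: Hl0.
have [D [FD DX]] := uf_disjoint_of_notin ufF bX FX.
have [l0 Hl0] := evF D FD; exists l0 => l l0l; split=> // PhiX.
by case: DX; apply: meetPhi PhiX; exact: Hl0.
Qed.

Section FiniteTypeFilter.
Variable xi : Selt G -> Prop.
Variable alpha : word G.
Hypothesis Hxi : ES_filter B xi.
Hypothesis Hft : finite_type xi alpha.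

Local Notation F := (xi_n B xi alpha (size alpha)).

Lemma F_idem X : F X <-> B X /\ xi (idem alpha X).
Proof. by rewrite /xi_n take_size. Qed.

Lemma xi_up x y : xi x -> isE B y -> Sle x y -> xi y.
Proof. by case: Hxi => _ [_ [upxi _]]; exact: upxi. Qed.

Lemma xi_meet x y : xi x -> xi y -> exists z, xi z /\ Sle z x /\ Sle z y.
Proof. by case: Hxi => _ [_ [_ [_ meetxi]]]; exact: meetxi. Qed.

Lemma xi_neq0 x : xi x -> x <> None.
Proof. by case: Hxi => _ [_ [_ [botxi _]]]; exact: botxi. Qed.

Lemma xi_size g W : xi (idem g W) -> size g <= size alpha.
Proof. by case: Hft => _; exact. Qed.

Lemma xi_idem x : xi x -> exists g W, x = idem g W /\ Bsub B g W /\ nonempty W.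
Proof. by case: Hxi => [carxi _] xix; apply: isE_Some (carxi _ xix) (xi_neq0 xix). Qed.

Lemma xi_mkS_nonempty g W h : xi (mkS g W h) -> nonempty W.
Proof. by move=> xiW; apply: NNPP => Wn; apply: (xi_neq0 xiW); rewrite mkS_empty. Qed.

(* An element of [xi] below some [(alpha, Y, alpha)] has word exactly [alpha],
   since no word of [xi] is longer than [alpha]. *)
Lemma xi_below_alpha z Y : xi z -> Sle z (idem alpha Y) ->
  exists W, z = idem alpha W /\ F W /\ subs W Y.
Proof.
move=> xiz; have [g [W [Ez [[BW _] Wn]]]] := xi_idem xiz; subst z.
case/(Sle_idem _ _ _ Wn) => d [Eg WY]; subst g; have := xi_size xiz.
rewrite size_cat -{2}(addn0 (size alpha)) leq_add2l leqn0 => /nilP Ed.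
rewrite Ed cats0 in xiz WY *; exists W; split=> //; split=> //; exact/F_idem.
Qed.

Lemma F_Bsub X : F X -> Bsub B alpha X /\ nonempty X.
Proof. by case/F_idem => _ /xi_idem [g [W [[<- <-] ?]]]. Qed.

Lemma F_ex : exists X, F X.
Proof.
case: Hft => [[Y xiY] _]; case: (xi_meet xiY xiY) => z [xiz [zY _]].
by case: (xi_below_alpha xiz zY) => W [_ [FW _]]; exists W.
Qed.

Lemma F_up X Y : F X -> Bsub B alpha Y -> subs X Y -> F Y.
Proof.
move=> FX [BY aY] XY; have [_ [v Xv]] := F_Bsub FX.
apply/F_idem; split=> //; apply: (xi_up (proj2 (proj1 (F_idem X) FX))).
  by apply: isE_idem => //; exists v; exact: XY.
by apply/Sle_idem; [exists v | exists [::]; rewrite cats0].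
Qed.

Lemma F_meet X Y : F X -> F Y -> exists W, F W /\ subs W X /\ subs W Y.
Proof.
move=> /F_idem [_ xiX] /F_idem [_ xiY]; have [z [xiz [zX zY]]] := xi_meet xiX xiY.
have [W [Ez [FW WX]]] := xi_below_alpha xiz zX.
have [W' [Ez' [_ WY]]] := xi_below_alpha xiz zY.
have EW : W = W' by move: Ez'; rewrite Ez => -[].
by exists W; split=> //; split=> //; rewrite EW.
Qed.

Lemma F_filter : is_filter (Bsub B alpha) (@subs G) (fun X => ~ nonempty X) F.
Proof.
split; first by move=> X /F_Bsub [].
split; first exact: F_ex.
split; first by move=> X Y FX aY XY; exact: (F_up FX aY XY).
split; first by move=> X /F_Bsub [_ Xn]; apply.
exact: F_meet.
Qed.

Lemma xi_prefix g W : xi (idem g W) ->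
  exists d C, alpha = g ++ d /\ F C /\ subs C (rr W d).
Proof.
move=> xigW; case: Hft => [[Y xiY] _]; have [z [xiz [zgW zY]]] := xi_meet xigW xiY.
have [C [Ez [FC _]]] := xi_below_alpha xiz zY.
move: zgW; rewrite Ez => /Sle_idem; case=> [|d [Ea CW]]; first by case: (F_Bsub FC).
by exists d, C.
Qed.

Lemma xi_of_F g W d C : Bsub B g W -> alpha = g ++ d -> F C -> subs C (rr W d) ->
  xi (idem g W).
Proof.
move=> gW Ea FC CW; have [_ [v Cv]] := F_Bsub FC.
apply: (xi_up (proj2 (proj1 (F_idem C) FC))).
  by apply: isE_idem => //; apply: (@rr_nonempty_src _ _ d); exists v; exact: CW.
by apply/Sle_idem; [exists v | exists d].
Qed.

Definition sink_limit (Phi : vset G -> Prop) :=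
  exists (L : Type) (le : L -> L -> Prop) (Fn : L -> vset G -> Prop),
    directed le /\ (forall l, X_sink B alpha (Fn l)) /\ converges B alpha le Fn Phi.

Definition branch_limit (Phi : vset G -> Prop) :=
  exists (L : Type) (le : L -> L -> Prop) (t : L -> alph G) (Fn : L -> vset G -> Prop),
    directed le /\ (forall l, X_ B (alpha ++ [:: t l]) (Fn l)) /\
    converges B alpha le (fun l => f_at B alpha (t l) (Fn l)) Phi /\
    (forall b : alph G, exists lb, forall l, le lb l -> t l <> b).

(* The cover [{(alpha, X ∩ Y, alpha), (alpha, X \ Y, alpha)}] of [(alpha, X, alpha)]. *)
Lemma tight_uf : tight B xi -> X_ B alpha F.
Proof.
move=> Ht; split=> [|F' filF' FF' Y F'Y]; first exact: F_filter.
have [X FX] := F_ex; have [[BX aX] _] := F_Bsub FX.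
have [BY aY] : Bsub B alpha Y by case: filF' => carF' _; exact: carF'.
pose z1 := mkS alpha (setI X Y) alpha; pose z2 := mkS alpha (setD X Y) alpha.
have aXY : Bsub B alpha (setI X Y) by split; [exact: B_setI | move=> v [/aX]].
have aXmY : Bsub B alpha (setD X Y) by split; [exact: Hrc | move=> v [/aX]].
have cov : is_cover B (idem alpha X) [:: z1; z2].
  split=> [z /= [<-|[<-|//]]|y Ey y0 yX].
  - by split; [exact: isE_mkS | apply: Sle_mkS (esym (cats0 _)) _ => v []].
  - by split; [exact: isE_mkS | apply: Sle_mkS (esym (cats0 _)) _ => v []].
  have [g [W [Ey' [_ [v Wv]]]]] := isE_Some Ey y0; subst y.
  have [d [-> WX]] := (Sle_idem _ _ _ (ex_intro _ v Wv)).1 yX.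
  have meets Z : rr Z d v -> Smul (mkS alpha Z alpha) (idem (alpha ++ d) W) <> None.
    move=> Zv; rewrite mkS_ne; last by apply: rr_nonempty_src; exists v; exact: Zv.
    by rewrite Smul_idem_catr mkS_ne //; exists v.
  case: (rr_setI_or_setD Y (WX v Wv)) => /meets z1y; [exists z1 | exists z2].
    by split=> //; left.
  by split=> //; right; left.
have [z [zZ xiz]] := Ht _ _ (proj2 (proj1 (F_idem X) FX)) cov.
case: zZ xiz => [<-|[<-|//]] xiz; have zn := xi_mkS_nonempty xiz.
  rewrite /z1 mkS_ne // in xiz.
  by apply: (@F_up (setI X Y)) => [|//|v []//]; apply/F_idem; split=> //; case: aXY.
rewrite /z2 mkS_ne // in xiz.
have /FF' F'XmY : F (setD X Y) by apply/F_idem; split=> //; case: aXmY.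
case: filF' => _ [_ [_ [botF' meetF']]].
have [w [F'w [wXmY wY]]] := meetF' _ _ F'XmY F'Y.
exfalso; apply: (botF' _ F'w) => -[u wu].
by case: (wXmY u wu) => _; apply; exact: wY.
Qed.

Lemma sink_limit_of_cofinal : X_ B alpha F ->
  (forall X, F X -> exists Gf, X_sink B alpha Gf /\ Gf X) -> sink_limit F.
Proof.
move=> ufF sinkF; pose L := {X : vset G | F X}.
have [Fn cP] := boolp.choice (fun l : L => sinkF _ (svalP l)).
exists L, (fun l1 l2 : L => subs (sval l2) (sval l1)), Fn.
split; [split; [|split; [|split]] | split].
- by case: F_ex => X FX; exists (exist _ X FX).
- by move=> l v.
- by move=> l1 l2 l3 l12 l23 v /l23 /l12.
- move=> l1 l2; have [W [FW [W1 W2]]] := F_meet (svalP l1) (svalP l2).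
  by exists (exist _ W FW).
- by move=> l; case: (cP l).
apply: converges_to_uf => // [l X Y lX aY XY|l X Y lX lY|X FX].
- by case: (cP l) => [[ufl _] _]; exact: (uf_up ufl lX aY XY).
- by case: (cP l) => [[ufl _] _]; exact: (uf_setI_nonempty ufl lX lY).
exists (exist _ X FX) => l Xl; case: (cP l) => [[ufl _] lX].
exact: (uf_up ufl lX (F_Bsub FX).1 Xl).
Qed.

(* Index the net by pairs (member of [F], finite set of letters to avoid). *)
Lemma branch_limit_of_letters : X_ B alpha F ->
  (forall X, F X -> forall s : seq (alph G), exists t, t \notin s /\
     exists Gf, X_ B (alpha ++ [:: t]) Gf /\ Gf (rr X [:: t])) ->
  branch_limit F.
Proof.
move=> ufF letF; pose L := {p : vset G * seq (alph G) | F p.1}.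
have [t tP] := boolp.choice (fun l : L => letF _ (svalP l) (sval l).2).
have [Fn FnP] := boolp.choice (fun l : L => proj2 (tP l)).
pose mk X s (FX : F X) : L := exist (fun p => F p.1) (X, s) FX.
exists L, (fun l1 l2 => subs (sval l2).1 (sval l1).1 /\ {subset (sval l1).2 <= (sval l2).2}).
exists t, Fn.
have [X0 FX0] := F_ex.
split; [split; [|split; [|split]] | split; [|split]].
- by exists (mk X0 [::] FX0).
- by move=> l; split.
- by move=> l1 l2 l3 [l12 s12] [l23 s23]; split=> [v /l23 /l12 | x /s12 /s23].
- move=> l1 l2; have [W [FW [W1 W2]]] := F_meet (svalP l1) (svalP l2).
  by exists (mk W ((sval l1).2 ++ (sval l2).2) FW); split; split=> //= x sx;
    rewrite mem_cat sx ?orbT.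
- by move=> l; case: (FnP l).
- apply: converges_to_uf => // [l X Y [aX lX] aY XY|l X Y [aX lX] [aY lY]|X FX].
  + split=> //; case: (FnP l) => ufl _.
    exact: (uf_up ufl lX (Bsub_rr _ aY) (rr_mono XY)).
  + apply: NNPP => XY; case: (FnP l) => ufl _.
    exact: (rr_setI_empty aX.1 aY.1 XY (uf_setI_nonempty ufl lX lY)).
  exists (mk X [::] FX) => l [lX _]; case: (FnP l) => ufl ll.
  have [aX _] := F_Bsub FX.
  by split=> //; exact: (uf_up ufl ll (Bsub_rr _ aX) (rr_mono lX)).
move=> b; exists (mk X0 [:: b] FX0) => l [_ bl] tb.
by move: (proj1 (tP l)); rewrite tb (bl b) // mem_seq1.
Qed.

Lemma letter_cover W (s : seq (alph G)) : Bsub B alpha W ->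
  (forall t, t \notin s -> ~ nonempty (rr W [:: t])) ->
  (forall W', Bsub B alpha W' -> nonempty W' -> subs W' W -> ~ sink_set W') ->
  is_cover B (idem alpha W)
    [seq mkS (alpha ++ [:: t]) (rr W [:: t]) (alpha ++ [:: t]) | t <- s].
Proof.
move=> aW offs nosink; split.
  move=> z /List.in_map_iff [t [<- _]].
  by split; [apply: isE_mkS; exact: Bsub_rr | exact: Sle_mkS].
move=> y Ey y0 yW; have [g [W' [Ey' [gW' [v W'v]]]]] := isE_Some Ey y0; subst y.
have [d [Eg W'W]] := (Sle_idem _ _ _ (ex_intro _ v W'v)).1 yW; subst g.
clear Ey y0 yW; case: d W'W gW' => [|t e] W'W gW'.
  rewrite cats0 in gW' *.
  case: (classic (exists t, t \in s /\ nonempty (rr W' [:: t]))) => [[t [st [u W'u]]]|nots].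
    have Wu : rr W [:: t] u by exact: (rr_mono W'W W'u).
    exists (mkS (alpha ++ [:: t]) (rr W [:: t]) (alpha ++ [:: t])).
    split; first exact: In_map_mem.
    by rewrite mkS_ne; [rewrite Smul_idem_catl mkS_ne //; exists u | exists u].
  case: (nosink W' gW' (ex_intro _ v W'v) W'W) => b [u W'u].
  case: (boolP (b \in s)) => sb; first by apply: nots; exists b; split=> //; exists u.
  by apply: (offs b sb); exists u; exact: (rr_mono W'W W'u).
have Wt : nonempty (rr W [:: t]).
  by apply: (@rr_nonempty_first _ _ _ e); exists v; exact: W'W.
case: (boolP (t \in s)) => st; last by case: (offs t st Wt).
exists (mkS (alpha ++ [:: t]) (rr W [:: t]) (alpha ++ [:: t])).
split; first exact: In_map_mem.
rewrite mkS_ne // -[t :: e]/([:: t] ++ e) catA Smul_idem_catr mkS_ne //.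
by exists v; split=> //; rewrite rr_cat; exact: W'W.
Qed.

Lemma tight_letters A0 :
  tight B xi -> F A0 -> ~ (exists Gf, X_sink B alpha Gf /\ Gf A0) ->
  forall W, F W -> subs W A0 ->
  forall s : seq (alph G), exists t, t \notin s /\ nonempty (rr W [:: t]).
Proof.
move=> Ht FA0 noGf W FW WA0 s; apply: NNPP => nos.
have offs t : t \notin s -> ~ nonempty (rr W [:: t]) by move=> st Wt; apply: nos; exists t.
have nosink W' : Bsub B alpha W' -> nonempty W' -> subs W' W -> ~ sink_set W'.
  move=> aW' W'n W'W sW'; have [Gf [sinkGf GW']] := sink_uf_of_sink_set aW' W'n sW'.
  apply: noGf; exists Gf; split=> //.
  by apply: (uf_up (proj1 sinkGf) GW' (F_Bsub FA0).1) => v /W'W /WA0.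
have cov := letter_cover (F_Bsub FW).1 offs nosink.
have [z [/List.in_map_iff [t [<- _]] xiz]] := Ht _ _ (proj2 (proj1 (F_idem W) FW)) cov.
have zn := xi_mkS_nonempty xiz; rewrite mkS_ne // in xiz.
by move: (xi_size xiz); rewrite size_cat addn1 ltnn.
Qed.

Lemma tight_limits : tight B xi -> X_ B alpha F -> sink_limit F \/ branch_limit F.
Proof.
move=> Ht ufF.
case: (classic (forall X, F X -> exists Gf, X_sink B alpha Gf /\ Gf X)) => [cof|].
  by left; exact: sink_limit_of_cofinal.
case/not_all_ex_not => A0 /(imply_to_and (F A0)) [FA0 noGf].
right; apply: branch_limit_of_letters => // X FX s.
have [W [FW [WX WA0]]] := F_meet FX FA0.
have [t [ts Wt]] := tight_letters Ht FA0 noGf FW WA0 s.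
have [Gf [ufGf GfW]] := uf_of_nonempty (Bsub_rr [:: t] (F_Bsub FW).1) Wt.
exists t; split=> //; exists Gf; split=> //.
exact: (uf_up ufGf GfW (Bsub_rr _ (F_Bsub FX).1) (rr_mono WX)).
Qed.

Definition prefix_orthogonal (Z : seq (Selt G)) (A : vset G) :=
  forall g W d, List.In (idem g W) Z -> alpha = g ++ d -> ~ nonempty (setI (rr W d) A).

Definition escapes (Z : seq (Selt G)) (y : Selt G) :=
  forall g W, List.In (idem g W) Z -> Bsub B g W -> Smul (idem g W) y = None.

(* Each member of [Z] whose word is a prefix of [alpha] lies outside [xi], so its trace
   on [alpha] lies outside the ultrafilter [F] and is disjoint from a member of [F]. *)
Lemma cover_reduction x (Z : seq (Selt G)) : X_ B alpha F -> xi x ->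
  (forall z, List.In z Z -> isE B z /\ ~ xi z) ->
  exists A, [/\ F A,
    forall u W0, nonempty W0 -> subs W0 (rr A u) -> Sle (idem (alpha ++ u) W0) x
    & prefix_orthogonal Z A].
Proof.
move=> ufF xix ZE; have [beta [X [Ex _]]] := xi_idem xix; subst x.
have [delta [A [Ea [FA AX]]]] := xi_prefix xix.
pose Q (z : Selt G) (A : vset G) :=
  if z is Some (g, W, _) then forall d, alpha = g ++ d -> ~ nonempty (setI (rr W d) A) else True.
have [A' [FA' A'A QA']] :
    exists A', [/\ F A', subs A' A & forall z, List.In z Z -> Q z A'].
  apply: (@uf_finite_meet _ _ ufF _ Z Q A _ FA)
    => [[[[g W] h]|] // Y1 Y2 QY1 Y21 d Ed [v [Wv Y2v]]|z zZ].
    by apply: (QY1 d Ed); exists v; split=> //; exact: Y21.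
  case: (ZE z zZ) => zE xiz; case: (classic (z = None)) => [->|z0]; first by exists A.
  have [g [W [Ez [gW _]]]] := isE_Some zE z0; subst z.
  case: (classic (exists d, alpha = g ++ d)) => [[d Ed]|nd]; last first.
    by exists A; split=> // d Ed; case: nd; exists d.
  have aWd : Bsub B alpha (rr W d) by rewrite Ed; exact: Bsub_rr.
  have [|D [FD DW]] := uf_disjoint_of_notin ufF aWd.
    by move=> FWd; apply: xiz; exact: (xi_of_F gW Ed FWd (fun v h => h)).
  by exists D; split=> // d'; rewrite Ed => /catI <- [v [Wv Dv]]; apply: DW; exists v.
exists A'; split=> // [u W0 W0n W0A'|g W d gZ Ed].
  apply/Sle_idem => //; exists (delta ++ u); split; first by rewrite Ea catA.
  by rewrite -rr_cat; move=> v /W0A'; apply: rr_mono => w /A'A /AX.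
exact: QA' _ gZ d Ed.
Qed.

Lemma tight_of_escape : X_ B alpha F ->
  (forall A (Z : seq (Selt G)), F A -> prefix_orthogonal Z A ->
     exists u W0, [/\ Bsub B (alpha ++ u) W0, nonempty W0, subs W0 (rr A u)
                   & escapes Z (idem (alpha ++ u) W0)]) ->
  tight B xi.
Proof.
move=> ufF esc x Z xix [ZE cov]; apply: NNPP => noZ.
have ZE' z : List.In z Z -> isE B z /\ ~ xi z.
  by move=> zZ; split; [exact: (ZE z zZ).1 | move=> xiz; apply: noZ; exists z].
have [A [FA below orth]] := cover_reduction ufF xix ZE'.
have [u [W0 [aW0 W0n W0A escW0]]] := esc A Z FA orth.
have y0 : idem (alpha ++ u) W0 <> None by [].
have [z [zZ]] := cov _ (isE_idem aW0 W0n) y0 (below u W0 W0n W0A).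
case: (classic (z = None)) => [-> //|z0].
have [g [W [Ez [gW _]]]] := isE_Some (ZE z zZ).1 z0; subst z.
by apply; exact: escW0.
Qed.

Lemma sink_escape A (Z : seq (Selt G)) :
  sink_limit F -> F A -> prefix_orthogonal Z A ->
  exists u W0, [/\ Bsub B (alpha ++ u) W0, nonempty W0, subs W0 (rr A u)
                & escapes Z (idem (alpha ++ u) W0)].
Proof.
move=> [L [le [Fn [[_ [le_refl _]] [sinkFn convFn]]]]] FA orth.
have [l Hl] := convFn A (F_Bsub FA).1; have [ufl sinkl] := sinkFn l.
have FnA : Fn l A by apply/(Hl l (le_refl l)).
pose Q (z : Selt G) (W0 : vset G) :=
  if z is Some (g, _, _) then forall b e, g = alpha ++ b :: e -> ~ nonempty (rr W0 [:: b])
  else True.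
have [W0 [FnW0 W0A QW0]] :
    exists W0, [/\ Fn l W0, subs W0 A & forall z, List.In z Z -> Q z W0].
  apply: (@uf_finite_meet _ _ ufl _ Z Q A _ FnA)
    => [[[[g W] h]|] // Y1 Y2 QY1 Y21 b e Eg [v Y2v]|z _].
    by apply: (QY1 b e Eg); exists v; exact: (rr_mono Y21 Y2v).
  case: z => [[[g W] h]|]; last by exists A.
  case: (classic (exists b e, g = alpha ++ b :: e)) => [[b [e Eg]]|nbe]; last first.
    by exists A; split=> // b e Eg; case: nbe; exists b, e.
  have [E [FnE Eb]] := sinkl b; exists E; split=> // b' e'.
  by rewrite Eg => /catI [<- _] [v Ev]; exact: Eb v Ev.
exists [::], W0; rewrite cats0; split=> //; first exact: (uf_Bsub ufl FnW0).
  exact: (uf_nonempty ufl FnW0).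
move=> g W gZ gW; case: (word_cases g alpha) => [[d Ed]|[b [e Eg]]|[ga ag]].
- rewrite Ed Smul_idem_catr mkS_empty // => -[v [Wv W0v]].
  by apply: (orth g W d gZ Ed); exists v; split=> //; exact: W0A.
- rewrite Eg Smul_idem_catl mkS_empty // => -[v [_ W0v]].
  by apply: (QW0 _ gZ b e Eg); apply: rr_nonempty_first; exists v; exact: W0v.
exact: Smul_idem_incomparable.
Qed.

Lemma branch_escape A (Z : seq (Selt G)) :
  branch_limit F -> F A -> prefix_orthogonal Z A ->
  exists u W0, [/\ Bsub B (alpha ++ u) W0, nonempty W0, subs W0 (rr A u)
                & escapes Z (idem (alpha ++ u) W0)].
Proof.
move=> [L [le [t [Fn [dir [ufFn [convFn tb]]]]]]] FA orth.
pose Q (z : Selt G) (l : L) :=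
  if z is Some (g, _, _) then forall b e, g = alpha ++ b :: e -> t l <> b else True.
have [l0 Ql0] : exists l0, forall l, le l0 l -> forall z, List.In z Z -> Q z l.
  apply: (directed_eventually_all dir) => -[[[g W] h]|] _; last first.
    by case: dir => -[l _] _; exists l.
  case: (classic (exists b e, g = alpha ++ b :: e)) => [[b [e Eg]]|nbe]; last first.
    by case: dir => -[l _] _; exists l => l' _ b e Eg; case: nbe; exists b, e.
  have [lb Hlb] := tb b; exists lb => l lbl b' e'.
  by rewrite Eg => /catI [<- _]; exact: Hlb.
have [l1 Hl1] := convFn A (F_Bsub FA).1.
have [_ [_ [le_trans ub]]] := dir; have [l [l0l l1l]] := ub l0 l1.
have [_ FnA] : f_at B alpha (t l) (Fn l) A by apply/(Hl1 l l1l).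
exists [:: t l], (rr A [:: t l]); split=> //.
- exact: (uf_Bsub (ufFn l) FnA).
- exact: (uf_nonempty (ufFn l) FnA).
have Qg g W : List.In (idem g W) Z -> forall e, g <> alpha ++ t l :: e.
  by move=> gZ e Eg; exact: (Ql0 l l0l _ gZ _ e Eg).
move=> g W gZ gW.
case: (word_cases g (alpha ++ [:: t l])) => [[d Ed]|[b [e Eg]]|[ga ag]].
- case/lastP: d Ed => [|d c] Ed; first by case: (Qg g W gZ [::]); rewrite Ed cats0.
  move: Ed; rewrite -cats1 catA !cats1 => /rcons_inj [Ea _].
  rewrite Ea -cats1 -catA Smul_idem_catr -rr_cat mkS_empty //.
  exact: (rr_setI_empty (B_rr _ gW.1) (F_Bsub FA).1.1 (orth g W d gZ Ea)).
- by case: (Qg g W gZ (b :: e)); rewrite Eg -catA.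
exact: Smul_idem_incomparable.
Qed.

Lemma tight_of_limits : X_ B alpha F -> sink_limit F \/ branch_limit F -> tight B xi.
Proof.
move=> ufF lim; apply: tight_of_escape => // A Z FA orth.
by case: lim => [/sink_escape | /branch_escape]; apply.
Qed.

End FiniteTypeFilter.

End LabelledSpace.

Theorem mainTheorem17 (G : lgraph)
  (HV : inhabited (vtx G))
  (Hsurj : forall a : alph G, exists e : edg G, lab e = a)
  (B : vset G -> Prop)
  (Hacc : accommodating B) (Hwlr : weakly_left_resolving B)
  (Hrc : relcomp_closed B)
  (xi : Selt G -> Prop) (alpha : word G)
  (Hxi : ES_filter B xi) (Hft : finite_type xi alpha) :
  tight B xi <->
  (X_ B alpha (xi_n B xi alpha (size alpha)) /\
   ((exists (L : Type) (le : L -> L -> Prop) (Fn : L -> vset G -> Prop),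
       directed le /\ (forall l, X_sink B alpha (Fn l)) /\
       converges B alpha le Fn (xi_n B xi alpha (size alpha)))
    \/
    (exists (L : Type) (le : L -> L -> Prop) (t : L -> alph G)
            (Fn : L -> vset G -> Prop),
       directed le /\
       (forall l, X_ B (alpha ++ [:: t l]) (Fn l)) /\
       converges B alpha le (fun l => f_at B alpha (t l) (Fn l))
                 (xi_n B xi alpha (size alpha)) /\
       (forall b : alph G, exists lb, forall l, le lb l -> t l <> b)))).
Proof.
split=> [tightxi | [ufF lim]].
  have ufF := tight_uf Hacc Hrc Hxi Hft tightxi.
  by split=> //; exact: (tight_limits Hacc Hwlr Hrc Hxi Hft tightxi ufF).
exact: (tight_of_limits Hacc Hwlr Hrc Hxi Hft ufF lim).
Qed.
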